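(* Let $S$ be a numerical semigroup. If $\mathrm{Ap}(S)$ is $\alpha$-rectangular then it is $\beta$-rectangular, and if it is $\beta$-rectangular then it is $\gamma$-rectangular. Both implications are strict: $S=\langle 8,10,15\rangle$ has $\beta$-rectangular but not $\alpha$-rectangular Apéry set, and $S=\langle 8,10,11,12\rangle$ has $\gamma$-rectangular but not $\beta$-rectangular Apéry set.
   Context: A numerical semigroup is a submonoid $S$ of $(\mathbb N,+)$ with finite complement in $\mathbb N$; $g_1<\dots<g_\nu$ is its minimal system of generators, $m=g_1$, and $\mathrm{Ap}(S)=\{s\in S: s-m\notin S\}$. A representation of $s\in S$ is an expression $s=\sum_{i=1}^\nu\lambda_ig_i$, $\lambda_i\in\mathbb N$; $\mathrm{ord}(s)$ is the maximum of $\sum\lambda_i$ over all representations; a representation is maximal if $\sum\lambda_i=\mathrm{ord}(s)$. For $i=2,\dots,\nu$: $\alpha_i=\max\{h: hg_i\in\mathrm{Ap}(S)\}$; $\beta_i=\max\{h: hg_i\in\mathrm{Ap}(S),\ \mathrm{ord}(hg_i)=h\}$; $\gamma_i=\max\{h: hg_i\in\mathrm{Ap}(S),\ \mathrm{ord}(hg_i)=h,\ hg_i\text{ has a unique maximal representation}\}$ (all $h\in\mathbb N$). For $\delta\in\{\alpha,\beta,\gamma\}$, $\mathrm{Ap}(S)$ is $\delta$-rectangular if $\mathrm{Ap}(S)=\{\sum_{i=2}^\nu\lambda_ig_i: 0\le\lambda_i\le\delta_i\}$. *)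

From mathcomp Require Import all_boot.
Set Implicit Arguments. Unset Strict Implicit. Unset Printing Implicit Defensive.

(* A numerical semigroup S is represented by its minimal system of generators
   g = [:: g_1; ...; g_nu] (0-based: gen g 0 = g_1 = m, ..., gen g (size g).-1). *)
Definition gen (g : seq nat) (i : nat) : nat := nth 0 g i.

Definition repr_of (g : seq nat) (l : nat -> nat) (s : nat) : Prop :=
  s = \sum_(0 <= i < size g) l i * gen g i.

Definition rlen (g : seq nat) (l : nat -> nat) : nat := \sum_(0 <= i < size g) l i.

Definition inS (g : seq nat) (s : nat) : Prop := exists l, repr_of g l s.

Definition is_numsgp_mingens (g : seq nat) : Prop :=
  [/\ sorted ltn g, 0 < gen g 0,
      (exists F, forall x, F <= x -> inS g x) &
      (forall i, i < size g -> ~ exists l, l i = 0 /\ repr_of g l (gen g i))].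

Definition mult (g : seq nat) : nat := gen g 0.

(* Apery set w.r.t. m: s in S and s - m not in S (s - m < 0 counts as not in S) *)
Definition Ap (g : seq nat) (s : nat) : Prop :=
  inS g s /\ ~ (mult g <= s /\ inS g (s - mult g)).

Definition ord_eq (g : seq nat) (s k : nat) : Prop :=
  (exists l, repr_of g l s /\ rlen g l = k) /\
  (forall l, repr_of g l s -> rlen g l <= k).

Definition maxrep (g : seq nat) (s : nat) (l : nat -> nat) : Prop :=
  repr_of g l s /\ ord_eq g s (rlen g l).

Definition unique_maxrep (g : seq nat) (s : nat) : Prop :=
  exists l, maxrep g s l /\
    forall l', maxrep g s l' -> forall i, i < size g -> l' i = l i.

Definition is_max (P : nat -> Prop) (a : nat) : Prop :=
  P a /\ forall h, P h -> h <= a.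

Definition Palpha (g : seq nat) (i h : nat) : Prop := Ap g (h * gen g i).
Definition Pbeta (g : seq nat) (i h : nat) : Prop :=
  Ap g (h * gen g i) /\ ord_eq g (h * gen g i) h.
Definition Pgamma (g : seq nat) (i h : nat) : Prop :=
  [/\ Ap g (h * gen g i), ord_eq g (h * gen g i) h & unique_maxrep g (h * gen g i)].

(* Ap(S) is delta-rectangular, where delta_i = max {h | P g i h} for
   i = 2..nu (0-based: 1 <= i < size g) *)
Definition rectangular (P : seq nat -> nat -> nat -> Prop) (g : seq nat) : Prop :=
  exists d : nat -> nat,
    (forall i, 0 < i < size g -> is_max (P g i) (d i)) /\
    (forall s, Ap g s <->
       exists l : nat -> nat,
         (forall i, 0 < i < size g -> l i <= d i) /\
         s = \sum_(1 <= i < size g) l i * gen g i).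

From mathcomp Require Import all_boot zify.
Set Implicit Arguments. Unset Strict Implicit. Unset Printing Implicit Defensive.

(* Write T = sum_(i >= 1) d_i g_i for the top of the box {sum l_i g_i : l_i <= d_i}
   and D = (0, d_2, ..., d_nu) for its obvious representation.  Two general
   facts drive the implications:
   - every part of a representation of an Apery element is an Apery element,
     and every part of a (unique) maximal representation is a (unique) maximal
     representation of its value (Sections Apery, MaximalRepresentations);
   - if Ap(S) is the box of d and d_i bounds every h with h g_i in Ap(S) and
     ord(h g_i) = h, then every maximal representation of T is dominated by
     D, hence D is the unique maximal representation of T
     ([corner_unique_maxrep]).
   Applied to the coefficient d_i of D this gives ord(d_i g_i) = d_i, with a
   unique maximal representation: alpha-rectangular sets are beta-rectangular
   and beta-rectangular sets are gamma-rectangular, with the same exponents.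
   For the two concrete semigroups every quantity involved is decided by
   enumerating the (finitely many) representations of an integer, so the
   examples reduce to finite computations (Section Certificates). *)

Definition rval (g : seq nat) (l : nat -> nat) : nat :=
  \sum_(0 <= i < size g) l i * gen g i.

Definition single (i h : nat) : nat -> nat := fun k => if k == i then h else 0.

Definition is_unique_maxrep (g : seq nat) (s : nat) (l : nat -> nat) : Prop :=
  maxrep g s l /\ forall l', maxrep g s l' -> forall i, i < size g -> l' i = l i.

Section Representations.
Variable g : seq nat.
Local Notation n := (size g).

Lemma rval_eq_in l l' : (forall i, i < n -> l i = l' i) -> rval g l = rval g l'.
Proof. by move=> E; apply: eq_big_nat => i /andP[_ /E ->]. Qed.

Lemma rlen_eq_in l l' : (forall i, i < n -> l i = l' i) -> rlen g l = rlen g l'.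
Proof. by move=> E; apply: eq_big_nat => i /andP[_ /E ->]. Qed.

Lemma rval_add l l' : rval g (fun i => l i + l' i) = rval g l + rval g l'.
Proof. by rewrite /rval -big_split; apply: eq_bigr => i _; rewrite mulnDl. Qed.

Lemma rlen_add l l' : rlen g (fun i => l i + l' i) = rlen g l + rlen g l'.
Proof. exact: big_split. Qed.

Lemma leq_rlen l l' : (forall i, i < n -> l i <= l' i) -> rlen g l <= rlen g l'.
Proof.
move=> le_ll'; rewrite /rlen big_nat_cond [leqRHS]big_nat_cond.
by apply: leq_sum => i /andP[/andP[_ /le_ll']].
Qed.

Lemma rlen_eq_dominated l m :
  (forall i, i < n -> l i <= m i) -> rlen g m <= rlen g l ->
  forall i, i < n -> l i = m i.
Proof.
move=> le_lm le_len i lt_in; apply/eqP; rewrite eqn_leq le_lm //= -subn_eq0.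
have : \sum_(0 <= k < n | (0 <= k < n) && true) (m k - l k) == 0.
  rewrite sumnB => [|k /andP[/andP[_ /le_lm]] //].
  by rewrite -!big_nat_cond subn_eq0.
by rewrite sum_nat_seq_eq0 => /allP/(_ i); rewrite mem_index_iota lt_in; apply.
Qed.

Lemma rval_single i h : i < n -> rval g (single i h) = h * gen g i.
Proof.
move=> lt_in; rewrite /rval (eq_bigr (fun k => if k == i then h * gen g i else 0)).
  by rewrite -big_mkcond big_nat1_eq lt_in.
by move=> k _; rewrite /single; case: eqP => [->|].
Qed.

Lemma rlen_single i h : i < n -> rlen g (single i h) = h.
Proof.
move=> lt_in; rewrite /rlen (eq_bigr (fun k => if k == i then h else 0)) //.
by rewrite -big_mkcond big_nat1_eq lt_in.
Qed.

Lemma rval_split l m : (forall i, i < n -> m i <= l i) ->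
  rval g l = rval g m + rval g (fun i => l i - m i).
Proof. by move=> le_ml; rewrite -rval_add; apply: rval_eq_in => i /le_ml; lia. Qed.

Lemma rlen_split l m : (forall i, i < n -> m i <= l i) ->
  rlen g l = rlen g m + rlen g (fun i => l i - m i).
Proof. by move=> le_ml; rewrite -rlen_add; apply: rlen_eq_in => i /le_ml; lia. Qed.

Lemma single_le l i : forall k, k < n -> single i (l i) k <= l k.
Proof. by move=> k _; rewrite /single; case: eqP => [->|]. Qed.

End Representations.

Section Apery.
Variable g : seq nat.
Local Notation n := (size g).

Lemma inS_add a b : inS g a -> inS g b -> inS g (a + b).
Proof. by move=> [l ->] [l' ->]; exists (fun i => l i + l' i); apply/esym/rval_add. Qed.

Lemma inS0 : inS g 0.
Proof. by exists (fun=> 0); rewrite /repr_of big1. Qed.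

Lemma Ap_summand a b : Ap g (a + b) -> inS g a -> inS g b -> Ap g a.
Proof.
move=> [_ notAm] Sa Sb; split=> // -[le_ma Sam]; apply: notAm; split; first lia.
have -> : a + b - mult g = (a - mult g) + b by lia.
exact: inS_add.
Qed.

Lemma Ap_subrep s l m : Ap g s -> repr_of g l s ->
  (forall i, i < n -> m i <= l i) -> Ap g (rval g m).
Proof.
move=> Ap_s ls le_ml; apply: (@Ap_summand _ (rval g (fun i => l i - m i))).
- by rewrite -rval_split //; move: Ap_s; rewrite ls.
- by exists m.
- by eexists.
Qed.

Lemma Ap_coef s l i : Ap g s -> repr_of g l s -> i < n -> Ap g (l i * gen g i).
Proof.
move=> Ap_s ls lt_in; rewrite -(@rval_single g i (l i) lt_in).
exact: Ap_subrep Ap_s ls (single_le l i).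
Qed.

Lemma Ap_coef0 s l : 0 < n -> Ap g s -> repr_of g l s -> l 0 = 0.
Proof.
move=> n_gt0 Ap_s ls; apply/eqP; rewrite -leqn0 leqNgt; apply/negP => l0_gt0.
have le_1l k : k < n -> single 0 1 k <= l k by rewrite /single; case: eqP => [->|].
have [_ []] := Ap_subrep Ap_s ls le_1l.
by rewrite rval_single // mul1n subnn; split; [|exact: inS0].
Qed.

End Apery.

Section MaximalRepresentations.
Variable g : seq nat.
Local Notation n := (size g).

Lemma ord_uniq s a b : ord_eq g s a -> ord_eq g s b -> a = b.
Proof.
move=> [[la [la_s <-]] a_ub] [[lb [lb_s <-]] b_ub].
by apply/eqP; rewrite eqn_leq a_ub ?b_ub.
Qed.

Lemma repr_ofE l s : repr_of g l s <-> s = rval g l.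
Proof. by []. Qed.

Lemma repr_replace s l m m' : repr_of g l s -> (forall i, i < n -> m i <= l i) ->
  rval g m' = rval g m -> repr_of g (fun k => m' k + (l k - m k)) s.
Proof. by move=> ls le_ml m'_val; rewrite repr_ofE rval_add m'_val -rval_split. Qed.

Lemma maxrep_sub s l m : maxrep g s l -> (forall i, i < n -> m i <= l i) ->
  maxrep g (rval g m) m.
Proof.
move=> [ls [_ l_ub]] le_ml; split=> //; split=> [|m' /esym m'_val]; first by exists m.
have /l_ub := repr_replace ls le_ml m'_val.
by rewrite rlen_add (rlen_split le_ml) leq_add2r.
Qed.

Lemma unique_maxrep_sub s l m : is_unique_maxrep g s l ->
  (forall i, i < n -> m i <= l i) -> is_unique_maxrep g (rval g m) m.
Proof.
move=> [lmax l_uniq] le_ml; have mmax := maxrep_sub lmax le_ml.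
split=> // m' [/esym m'_val m'_ord] i lt_in.
have m'_len : rlen g m' = rlen g m := ord_uniq m'_ord mmax.2.
have : maxrep g s (fun k => m' k + (l k - m k)).
  split; first exact: repr_replace lmax.1 le_ml m'_val.
  by rewrite rlen_add m'_len -rlen_split //; exact: lmax.2.
by move/l_uniq/(_ i lt_in); have := le_ml i lt_in; lia.
Qed.

Lemma ord_coef s l i : maxrep g s l -> i < n -> ord_eq g (l i * gen g i) (l i).
Proof.
move=> lmax lt_in; have [_] := maxrep_sub lmax (single_le l i).
by rewrite rval_single // rlen_single.
Qed.

Lemma unique_maxrep_coef s l i : is_unique_maxrep g s l -> i < n ->
  is_unique_maxrep g (l i * gen g i) (single i (l i)).
Proof.
move=> lmax lt_in; rewrite -(rval_single _ lt_in).
exact: unique_maxrep_sub lmax (single_le l i).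
Qed.

Lemma dominating_unique_maxrep s m : repr_of g m s -> (exists l, maxrep g s l) ->
  (forall l, maxrep g s l -> forall i, i < n -> l i <= m i) -> is_unique_maxrep g s m.
Proof.
move=> ms [l0 l0max] dom.
have mmax : maxrep g s m.
  have [_ l0_ord] := l0max; split=> //.
  have -> // : rlen g m = rlen g l0.
  by apply/eqP; rewrite eqn_leq l0_ord.2 // (leq_rlen (dom _ l0max)).
split=> // l lmax; apply: rlen_eq_dominated (dom l lmax) _.
by have [_ [_ ->]] := lmax.
Qed.

End MaximalRepresentations.

(* [reps g s] lists the coefficient sequences of all representations of [s];
   it is exact when all generators are positive ([mem_reps]). *)
Fixpoint reps (g : seq nat) (s : nat) : seq (seq nat) :=
  if g is a :: g' then
    flatten [seq [seq k :: c | c <- reps g' (s - k * a)] | k <- iota 0 (s %/ a).+1]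
  else if s == 0 then [:: [::]] else [::].

Definition coefs (g : seq nat) (l : nat -> nat) : seq nat := mkseq l (size g).

Lemma rval_cons a g l : rval (a :: g) l = l 0 * a + rval g (fun i => l i.+1).
Proof. by rewrite /rval big_nat_recl. Qed.

Lemma rlen_cons a g l : rlen (a :: g) l = l 0 + rlen g (fun i => l i.+1).
Proof. by rewrite /rlen big_nat_recl. Qed.

Lemma reps_cons a g s : reps (a :: g) s =
  flatten [seq [seq k :: c | c <- reps g (s - k * a)] | k <- iota 0 (s %/ a).+1].
Proof. by []. Qed.

Lemma mem_reps g s c : all (fun a => 0 < a) g ->
  (c \in reps g s) = (size c == size g) && (rval g (nth 0 c) == s).
Proof.
elim: g s c => [|a g IH] s c.
  by move=> _; rewrite /rval big_geq //; case: s => [|s]; case: c.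
case/andP=> a_gt0 g_pos; rewrite reps_cons; apply/flatten_mapP/andP => [[k] | [size_c /eqP c_s]].
  rewrite mem_iota ltnS leq_divRL // => le_ka /mapP[c' c'_in ->{c}].
  move: c'_in; rewrite IH // => /andP[/eqP size_c' /eqP c'_s].
  by rewrite /= size_c' rval_cons /= c'_s; split=> //; apply/eqP; lia.
case: c size_c c_s => // k c /eqP[size_c] c_s; rewrite rval_cons /= in c_s.
exists k; first by rewrite mem_iota ltnS leq_divRL //; lia.
by apply/map_f; rewrite IH // size_c eqxx -c_s addKn; apply/eqP.
Qed.

Lemma rlen_nth g c : size c = size g -> rlen g (nth 0 c) = sumn c.
Proof.
elim: g c => [|a g IH] [|k c] //= => [_|[size_c]]; first by rewrite /rlen big_geq.
by rewrite rlen_cons IH.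
Qed.

Lemma foldr_maxn_ub x (xs : seq nat) : x \in xs -> x <= foldr maxn 0 xs.
Proof.
elim: xs => //= y xs IH; rewrite in_cons leq_max => /orP[/eqP->|/IH->].
  by rewrite leqnn.
by rewrite orbT.
Qed.

Lemma foldr_maxn_mem (xs : seq nat) : xs != [::] -> foldr maxn 0 xs \in xs.
Proof.
elim: xs => // x xs IH _; rewrite [foldr _ _ _]/= in_cons.
case: xs IH => [_|y xs IH]; first by rewrite maxn0 eqxx.
by rewrite /maxn; case: ifP => _; rewrite ?eqxx // IH ?orbT.
Qed.

Definition inSb (g : seq nat) (s : nat) : bool := reps g s != [::].
Definition Apb (g : seq nat) (s : nat) : bool :=
  inSb g s && ~~ ((mult g <= s) && inSb g (s - mult g)).
Definition ord_of (g : seq nat) (s : nat) : nat := foldr maxn 0 (map sumn (reps g s)).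
Definition maxreps (g : seq nat) (s : nat) : seq (seq nat) :=
  [seq c <- reps g s | sumn c == ord_of g s].
Definition umaxb (g : seq nat) (s : nat) : bool :=
  all (pred1 (head [::] (maxreps g s))) (maxreps g s).

Section Enumeration.
Variable g : seq nat.
Hypothesis g_pos : all (fun a => 0 < a) g.
Local Notation n := (size g).

Lemma nth_coefs l i : i < n -> nth 0 (coefs g l) i = l i.
Proof. by move=> lt_in; rewrite nth_mkseq. Qed.

Lemma rval_coefs l : rval g (nth 0 (coefs g l)) = rval g l.
Proof. by apply: rval_eq_in => i; apply: nth_coefs. Qed.

Lemma rlen_coefs l : rlen g (nth 0 (coefs g l)) = rlen g l.
Proof. by apply: rlen_eq_in => i; apply: nth_coefs. Qed.

Lemma coefs_reps l s : repr_of g l s -> coefs g l \in reps g s.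
Proof. by move=> ls; rewrite mem_reps // size_mkseq eqxx rval_coefs; apply/eqP/esym. Qed.

Lemma reps_repr c s : c \in reps g s -> repr_of g (nth 0 c) s.
Proof. by rewrite mem_reps // => /andP[_ /eqP <-]. Qed.

Lemma rlen_reps c s : c \in reps g s -> rlen g (nth 0 c) = sumn c.
Proof. by rewrite mem_reps // => /andP[/eqP size_c _]; apply: rlen_nth. Qed.

Lemma inSP s : reflect (inS g s) (inSb g s).
Proof.
apply: (iffP idP) => [|[l /coefs_reps l_in]].
  rewrite /inSb; case E: (reps g s) => [|c cs] // _.
  by exists (nth 0 c); apply: reps_repr; rewrite E mem_head.
by apply/eqP => reps0; rewrite reps0 in l_in.
Qed.

Lemma ApP s : reflect (Ap g s) (Apb g s).
Proof.
apply: (iffP andP) => [[/inSP S_s notAm]|[S_s notAm]].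
  by split=> // -[le_ms /inSP Sm]; rewrite le_ms Sm in notAm.
by split; [apply/inSP | apply/negP => /andP[le_ms /inSP Sm]; apply: notAm].
Qed.

Lemma ord_ofP s : inS g s -> ord_eq g s (ord_of g s).
Proof.
move=> /inSP reps_s; split.
  have /mapP[c c_in ->] : ord_of g s \in map sumn (reps g s).
    by apply: foldr_maxn_mem; rewrite -size_eq0 size_map size_eq0.
  by exists (nth 0 c); split; [exact: reps_repr c_in | exact: rlen_reps c_in].
move=> l /coefs_reps l_in; rewrite -rlen_coefs (rlen_reps l_in).
by apply/foldr_maxn_ub/map_f.
Qed.

Lemma ordP s k : inS g s -> ord_eq g s k <-> k = ord_of g s.
Proof. by move=> /ord_ofP ord_s; split=> [/ord_uniq|->] //; apply. Qed.

Lemma exists_maxrep s : inS g s -> exists l, maxrep g s l.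
Proof. by move=> /ord_ofP[[l [ls <-]] l_ub]; exists l; split=> //; split=> //; exists l. Qed.

Lemma maxrepsP s c : inS g s -> c \in maxreps g s -> maxrep g s (nth 0 c).
Proof.
move=> S_s; rewrite mem_filter => /andP[/eqP sum_c c_in].
by split; [apply: reps_repr | rewrite (rlen_reps c_in) sum_c; apply: ord_ofP].
Qed.

Lemma maxrep_maxreps s l : maxrep g s l -> coefs g l \in maxreps g s.
Proof.
move=> [ls l_ord]; rewrite mem_filter coefs_reps // andbT.
rewrite -(rlen_reps (coefs_reps ls)) rlen_coefs; apply/eqP.
by apply/(ordP _ (ex_intro _ l ls)).
Qed.

Lemma unique_maxrepP s : inS g s -> unique_maxrep g s <-> umaxb g s.
Proof.
move=> S_s; have [l lmax] := exists_maxrep S_s.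
have l_in := maxrep_maxreps lmax.
have head_in : head [::] (maxreps g s) \in maxreps g s.
  by case: (maxreps g s) l_in => // c cs _; rewrite mem_head.
split=> [[l0 [_ l0_uniq]] | /allP same].
  have coefs_eq c : c \in maxreps g s -> c = coefs g l0.
    move=> c_in; have /andP[/eqP size_c _] : (size c == n) && (rval g (nth 0 c) == s).
      by rewrite -mem_reps //; move: c_in; rewrite mem_filter => /andP[].
    apply: (@eq_from_nth _ 0) => [|i]; first by rewrite size_mkseq.
    by rewrite size_c => lt_in; rewrite nth_coefs // (l0_uniq _ (maxrepsP S_s c_in)).
  by apply/allP => c /coefs_eq ->; rewrite /= (coefs_eq _ head_in).
exists (nth 0 (head [::] (maxreps g s))); split; first exact: maxrepsP.
by move=> l' /maxrep_maxreps/same/eqP <- i lt_in; rewrite nth_coefs.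
Qed.

End Enumeration.

Lemma sorted_pos g : sorted ltn g -> 0 < gen g 0 -> all (fun a => 0 < a) g.
Proof.
case: g => // a g /= /(order_path_min ltn_trans)/allP a_lt a_gt0.
by rewrite a_gt0; apply/allP => x /a_lt; rewrite /gen /= in a_gt0; lia.
Qed.

Lemma mingens_pos g : is_numsgp_mingens g -> all (fun a => 0 < a) g.
Proof. by case=> *; apply: sorted_pos. Qed.

Lemma mingens_size g : is_numsgp_mingens g -> 0 < size g.
Proof. by case: g => [[]|]. Qed.

Definition in_box (g : seq nat) (d : nat -> nat) (s : nat) : Prop :=
  exists l : nat -> nat, (forall i, 0 < i < size g -> l i <= d i) /\
    s = \sum_(1 <= i < size g) l i * gen g i.

Definition corner (d : nat -> nat) : nat -> nat := fun i => if i == 0 then 0 else d i.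

Section Boxes.
Variable g : seq nat.
Hypothesis g_nonempty : 0 < size g.
Local Notation n := (size g).

Lemma rval_corner l : rval g (corner l) = \sum_(1 <= i < n) l i * gen g i.
Proof. by rewrite /rval big_ltn //= mul0n add0n; apply: eq_big_nat => -[]. Qed.

Lemma in_boxE d s :
  in_box g d s <-> exists2 l, (forall i, i < n -> l i <= corner d i) & repr_of g l s.
Proof.
split=> [[l [le_ld ->]] | [l le_ld ls]].
  exists (corner l) => [[|i] // lt_in|]; last by rewrite repr_ofE rval_corner.
  exact: le_ld.
have l0 : l 0 = 0 by apply/eqP; rewrite -leqn0 le_ld.
exists l; split=> [i /andP[i_gt0 lt_in]|]; first by have := le_ld i lt_in; rewrite /corner gtn_eqF.
by rewrite ls -rval_corner; apply: rval_eq_in => -[].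
Qed.

Lemma Ap_corner d : (forall s, Ap g s <-> in_box g d s) -> Ap g (rval g (corner d)).
Proof. by move=> rect; apply/rect/in_boxE; exists (corner d). Qed.

End Boxes.

Lemma corner_unique_maxrep g d : is_numsgp_mingens g ->
  (forall s, Ap g s <-> in_box g d s) ->
  (forall i h, 0 < i < size g -> Pbeta g i h -> h <= d i) ->
  is_unique_maxrep g (rval g (corner d)) (corner d).
Proof.
move=> g_sgp rect beta_le; have n_gt0 := mingens_size g_sgp.
have Ap_top := Ap_corner n_gt0 rect.
apply: dominating_unique_maxrep; first exact: erefl.
  exact: (exists_maxrep (mingens_pos g_sgp) Ap_top.1).
move=> l lmax [|i] lt_in; first by rewrite (Ap_coef0 n_gt0 Ap_top lmax.1).
apply: beta_le => //; split; [exact: Ap_coef Ap_top lmax.1 lt_in | exact: ord_coef lmax lt_in].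
Qed.

Lemma alpha_rectangular_beta g : is_numsgp_mingens g ->
  rectangular Palpha g -> rectangular Pbeta g.
Proof.
move=> g_sgp [d [alpha_max rect]]; exists d; split=> // i i_range.
have [Pa_d alpha_ub] := alpha_max i i_range.
have top := corner_unique_maxrep g_sgp rect
  (fun j h j_range Pb => (alpha_max j j_range).2 h Pb.1).
have /andP[i_gt0 lt_in] := i_range.
have [[_ ord_d] _] := unique_maxrep_coef top lt_in.
rewrite rlen_single // /corner gtn_eqF // in ord_d.
by split=> [|h [/alpha_ub]].
Qed.

Lemma beta_rectangular_gamma g : is_numsgp_mingens g ->
  rectangular Pbeta g -> rectangular Pgamma g.
Proof.
move=> g_sgp [d [beta_max rect]]; exists d; split=> // i i_range.
have [[Ap_d ord_d] beta_ub] := beta_max i i_range.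
have top := corner_unique_maxrep g_sgp rect (fun j h j_range => (beta_max j j_range).2 h).
have /andP[i_gt0 lt_in] := i_range.
have := unique_maxrep_coef top lt_in; rewrite /corner gtn_eqF // => uniq_d.
split=> [|h [Ap_h ord_h _]]; last exact: beta_ub.
by split=> //; exists (single i (d i)).
Qed.

Definition palpha (g : seq nat) (i h : nat) : bool := Apb g (h * gen g i).
Definition pbeta (g : seq nat) (i h : nat) : bool :=
  palpha g i h && (ord_of g (h * gen g i) == h).
Definition pgamma (g : seq nat) (i h : nat) : bool :=
  pbeta g i h && umaxb g (h * gen g i).

Definition maxima_ok (p : nat -> nat -> bool) (g : seq nat) (d : nat -> nat) (N : nat) : bool :=
  all (fun i => p i (d i) && all (fun h => ~~ p i h || (h <= d i)) (iota 0 (N %/ gen g i).+1))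
      (iota 1 (size g).-1).

Definition boxb (g : seq nat) (d : nat -> nat) (s : nat) : bool :=
  has (fun c => all (fun i => nth 0 c i <= corner d i) (iota 0 (size g))) (reps g s).

Definition box_top (g : seq nat) (d : nat -> nat) : nat :=
  sumn [seq corner d i * gen g i | i <- iota 0 (size g)].

Lemma is_max_uniq (P : nat -> Prop) a b : is_max P a -> is_max P b -> a = b.
Proof. by move=> [Pa a_ub] [Pb b_ub]; apply/eqP; rewrite eqn_leq a_ub ?b_ub. Qed.

Section Certificates.
Variable g : seq nat.
Hypothesis g_pos : all (fun a => 0 < a) g.
Hypothesis g_nonempty : 0 < size g.
Local Notation n := (size g).

Lemma gen_gt0 i : i < n -> 0 < gen g i.
Proof. by move=> lt_in; apply: (allP g_pos); rewrite mem_nth. Qed.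

Lemma PalphaP i h : reflect (Palpha g i h) (palpha g i h).
Proof. exact: (ApP g_pos _). Qed.

Lemma PbetaP i h : reflect (Pbeta g i h) (pbeta g i h).
Proof.
apply: (iffP andP) => [[/(ApP g_pos) Ap_s /eqP ord_h] | [Ap_s ord_s]].
  by split=> //; apply/(ordP g_pos _ Ap_s.1); rewrite ord_h.
by split; [apply/(ApP g_pos) | apply/eqP/esym/(ordP g_pos _ Ap_s.1)].
Qed.

Lemma PgammaP i h : reflect (Pgamma g i h) (pgamma g i h).
Proof.
apply: (iffP andP) => [[/PbetaP [Ap_s ord_s] uniq_s] | [Ap_s ord_s uniq_s]].
  by split=> //; apply/(unique_maxrepP g_pos Ap_s.1).
by split; [apply/PbetaP | apply/(unique_maxrepP g_pos Ap_s.1)].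
Qed.

Lemma conductor_check c : all (inSb g) (iota c (mult g)) -> forall x, c <= x -> inS g x.
Proof.
move=> /allP window; have m_gt0 : 0 < mult g by apply: gen_gt0.
have S_m : inS g (mult g) by exists (single 0 1); rewrite repr_ofE rval_single // mul1n.
suff S_below k x : c <= x < c + k * mult g -> inS g x.
  by move=> x le_cx; apply: (S_below x.+1); rewrite le_cx /=; nia.
elim: k x => [|k IH] x /andP[le_cx]; first lia.
have [lt_x|le_x] := ltnP x (c + mult g).
  by move=> _; apply/(inSP g_pos)/window; rewrite mem_iota le_cx.
move=> lt_xk; have -> : x = (x - mult g) + mult g by lia.
by apply: inS_add S_m; apply: IH; rewrite mulSn in lt_xk; lia.
Qed.

Lemma Ap_lt_check c s : all (inSb g) (iota c (mult g)) -> Ap g s -> s < c + mult g.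
Proof.
move=> /conductor_check S_ge [_ notAm]; rewrite ltnNge; apply/negP => le_s.
by apply: notAm; split; [lia | apply: S_ge; lia].
Qed.

Lemma maxima_check (P : nat -> nat -> Prop) (p : nat -> nat -> bool) d c :
  (forall i h, reflect (P i h) (p i h)) -> (forall i h, P i h -> Ap g (h * gen g i)) ->
  all (inSb g) (iota c (mult g)) -> maxima_ok p g d (c + mult g) ->
  forall i, 0 < i < n -> is_max (P i) (d i).
Proof.
move=> Pp P_Ap window /allP ok i /andP[i_gt0 lt_in].
have /andP[p_d /allP p_ub] : p i (d i) &&
    all (fun h => ~~ p i h || (h <= d i)) (iota 0 ((c + mult g) %/ gen g i).+1).
  by apply: ok; rewrite mem_iota; lia.
split=> [|h /[dup] Phi /P_Ap /(Ap_lt_check window)/ltnW lt_h]; first exact/Pp.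
have : h \in iota 0 ((c + mult g) %/ gen g i).+1.
  by rewrite mem_iota ltnS leq_divRL ?gen_gt0.
by move/p_ub; move/Pp: Phi => ->.
Qed.

Lemma boxP d s : reflect (in_box g d s) (boxb g d s).
Proof.
apply: (iffP hasP) => [[c c_in /allP c_le] | /(in_boxE g_nonempty _ _) [l le_ld ls]].
  apply/(in_boxE g_nonempty _ _); exists (nth 0 c); last exact: (reps_repr g_pos c_in).
  by move=> i lt_in; apply: c_le; rewrite mem_iota.
exists (coefs g l); first exact: (coefs_reps g_pos ls).
by apply/allP => i; rewrite mem_iota => /andP[_ lt_in]; rewrite nth_coefs // le_ld.
Qed.

Lemma box_topE d : box_top g d = rval g (corner d).
Proof. by rewrite /box_top sumnE big_map /rval /index_iota subn0. Qed.

Lemma rectangular_check (P : seq nat -> nat -> nat -> Prop) d c :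
  (forall i, 0 < i < n -> is_max (P g i) (d i)) ->
  all (inSb g) (iota c (mult g)) -> Apb g (box_top g d) ->
  all (fun s => Apb g s ==> boxb g d s) (iota 0 (c + mult g)) -> rectangular P g.
Proof.
move=> d_max window /(ApP g_pos); rewrite box_topE => Ap_top /allP Ap_box.
exists d; split=> // s; split=> [Ap_s | /(in_boxE g_nonempty _ _) [l le_ld ls]].
  apply/boxP; apply: (implyP (Ap_box s _)); last exact/(ApP g_pos).
  by rewrite mem_iota (Ap_lt_check window Ap_s).
by rewrite ls; apply: Ap_subrep Ap_top (erefl _) le_ld.
Qed.

Lemma not_rectangular_check (P : seq nat -> nat -> nat -> Prop) d s :
  (forall i, 0 < i < n -> is_max (P g i) (d i)) ->
  boxb g d s -> ~~ Apb g s -> ~ rectangular P g.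
Proof.
move=> d_max /boxP [l [le_ld s_val]] /(ApP g_pos) notAp [d' [d'_max rect]]; apply/notAp/rect.
exists l; split=> // i i_range.
by rewrite (is_max_uniq (d'_max i i_range) (d_max i i_range)); apply: le_ld.
Qed.

End Certificates.

Lemma numsgp_check g c : sorted ltn g -> 0 < gen g 0 ->
  all (inSb g) (iota c (mult g)) ->
  all (fun i => all (fun r => nth 0 r i != 0) (reps g (gen g i))) (iota 0 (size g)) ->
  is_numsgp_mingens g.
Proof.
move=> g_sorted g0_gt0 window /allP minimal; have g_pos := sorted_pos g_sorted g0_gt0.
have g_nonempty : 0 < size g by case: g g0_gt0 {g_sorted window minimal g_pos}.
split=> //; first by exists c; apply: conductor_check window.
move=> i lt_in [l [li0 /(coefs_reps g_pos) l_in]].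
have /minimal/allP/(_ _ l_in) : i \in iota 0 (size g) by rewrite mem_iota.
by rewrite nth_coefs // li0.
Qed.

(* S = <8, 10, 15>: beta = (3, 1) and Ap(S) is beta-rectangular, but
   alpha = (3, 3) and 3*10 + 3*15 = 75 is in the alpha-box although
   75 - 8 = 67 = 4*8 + 2*10 + 15 lies in S. *)
Definition G1 : seq nat := [:: 8; 10; 15].
Definition beta1 (i : nat) : nat := nth 0 [:: 0; 3; 1] i.
Definition alpha1 (i : nat) : nat := nth 0 [:: 0; 3; 3] i.

Lemma G1_numsgp : is_numsgp_mingens G1.
Proof. by apply: (numsgp_check (c := 38)); vm_compute. Qed.

Lemma G1_pos : all (fun a => 0 < a) G1. Proof. by []. Qed.

Lemma G1_beta_max : forall i, 0 < i < size G1 -> is_max (Pbeta G1 i) (beta1 i).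
Proof.
by apply: (@maxima_check _ G1_pos isT _ _ _ 38 (PbetaP G1_pos)) => [i h [] //||]; vm_compute.
Qed.

Lemma G1_alpha_max : forall i, 0 < i < size G1 -> is_max (Palpha G1 i) (alpha1 i).
Proof.
by apply: (@maxima_check _ G1_pos isT _ _ _ 38 (PalphaP G1_pos)) => [//||]; vm_compute.
Qed.

Lemma G1_beta : rectangular Pbeta G1.
Proof. apply: (@rectangular_check _ G1_pos isT _ _ 38 G1_beta_max); by vm_compute. Qed.

Lemma G1_not_alpha : ~ rectangular Palpha G1.
Proof. apply: (@not_rectangular_check _ G1_pos isT _ _ 75 G1_alpha_max); by vm_compute. Qed.

(* S = <8, 10, 11, 12>: gamma = (1, 1, 1) and Ap(S) is gamma-rectangular, but
   beta = (1, 3, 1) (33 = 3*11 = 10 + 11 + 12 has order 3) and 10 + 3*11 = 43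
   is in the beta-box although 43 - 8 = 35 = 11 + 2*12 lies in S. *)
Definition G2 : seq nat := [:: 8; 10; 11; 12].
Definition gamma2 (i : nat) : nat := nth 0 [:: 0; 1; 1; 1] i.
Definition beta2 (i : nat) : nat := nth 0 [:: 0; 1; 3; 1] i.

Lemma G2_numsgp : is_numsgp_mingens G2.
Proof. by apply: (numsgp_check (c := 26)); vm_compute. Qed.

Lemma G2_pos : all (fun a => 0 < a) G2. Proof. by []. Qed.

Lemma G2_gamma_max : forall i, 0 < i < size G2 -> is_max (Pgamma G2 i) (gamma2 i).
Proof.
by apply: (@maxima_check _ G2_pos isT _ _ _ 26 (PgammaP G2_pos)) => [i h [] //||]; vm_compute.
Qed.

Lemma G2_beta_max : forall i, 0 < i < size G2 -> is_max (Pbeta G2 i) (beta2 i).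
Proof.
by apply: (@maxima_check _ G2_pos isT _ _ _ 26 (PbetaP G2_pos)) => [i h [] //||]; vm_compute.
Qed.

Lemma G2_gamma : rectangular Pgamma G2.
Proof. apply: (@rectangular_check _ G2_pos isT _ _ 26 G2_gamma_max); by vm_compute. Qed.

Lemma G2_not_beta : ~ rectangular Pbeta G2.
Proof. apply: (@not_rectangular_check _ G2_pos isT _ _ 43 G2_beta_max); by vm_compute. Qed.

Theorem mainTheorem6 :
  (forall g : seq nat, is_numsgp_mingens g ->
     rectangular Palpha g -> rectangular Pbeta g) /\
  (forall g : seq nat, is_numsgp_mingens g ->
     rectangular Pbeta g -> rectangular Pgamma g) /\
  (is_numsgp_mingens [:: 8; 10; 15] /\
   rectangular Pbeta [:: 8; 10; 15] /\ ~ rectangular Palpha [:: 8; 10; 15]) /\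
  (is_numsgp_mingens [:: 8; 10; 11; 12] /\
   rectangular Pgamma [:: 8; 10; 11; 12] /\ ~ rectangular Pbeta [:: 8; 10; 11; 12]).
Proof.
split; first exact: alpha_rectangular_beta.
split; first exact: beta_rectangular_gamma.
split; first by split; [exact: G1_numsgp | split; [exact: G1_beta | exact: G1_not_alpha]].
by split; [exact: G2_numsgp | split; [exact: G2_gamma | exact: G2_not_beta]].
Qed.
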